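(* For finite groups $G$ and $H$, $P_e(G)\cong P_e(H)$ if and only if $C(G)\cong C(H)$ and $|G|=|H|$.
   Context: All groups are finite. For a group $X$, the enhanced power graph $P_e(X)$ is the simple graph with vertex set $X$ in which two distinct vertices $x,y$ are adjacent if and only if $\langle x,y\rangle$ is cyclic. Let $\mathrm{Cyc}(X)=\{x\in X : \langle x,y\rangle \text{ is cyclic for all } y\in X\}$. The cyclic graph $C(X)$ is the induced subgraph of $P_e(X)$ on the vertex set $X\setminus \mathrm{Cyc}(X)$, i.e. two vertices $x,y\in X\setminus\mathrm{Cyc}(X)$ are adjacent iff $\langle x,y\rangle$ is cyclic. *)

From mathcomp Require Import all_boot all_fingroup all_solvable.
Set Implicit Arguments. Unset Strict Implicit. Unset Printing Implicit Defensive.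
Local Open Scope group_scope.

(* A finite group is represented by a finGroupType gT, the group being [set: gT]. *)

Definition epg_adj (gT : finGroupType) (x y : gT) : bool :=
  (x != y) && cyclic <<[set x; y]>>.

Definition Cyc (gT : finGroupType) : {set gT} :=
  [set x : gT | [forall y : gT, cyclic <<[set x; y]>>]].

Definition induced_graph_iso (T U : finType) (eT : rel T) (eU : rel U)
    (A : {set T}) (B : {set U}) : Prop :=
  exists f : T -> U,
    [/\ {in A &, injective f}, f @: A = B &
        {in A &, forall x y, eT x y = eU (f x) (f y)}].

Definition Pe_iso (gT hT : finGroupType) : Prop :=
  induced_graph_iso (@epg_adj gT) (@epg_adj hT) [set: gT] [set: hT].

(* C(G) ≅ C(H): cyclic graph = induced subgraph of P_e on X \ Cyc(X) *)
Definition cyc_graph_iso (gT hT : finGroupType) : Prop :=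
  induced_graph_iso (@epg_adj gT) (@epg_adj hT) (~: Cyc gT) (~: Cyc hT).

From mathcomp Require Import all_boot all_fingroup all_solvable.
Set Implicit Arguments. Unset Strict Implicit. Unset Printing Implicit Defensive.
Local Open Scope group_scope.

(** Cyc(X) is exactly the set of universal vertices of P_e(X), i.e. of the
  vertices adjacent to all others, and C(X) is P_e(X) with them removed.
  A graph isomorphism maps universal vertices onto universal vertices, so it
  restricts to an isomorphism of the remaining induced subgraphs. Conversely,
  in a simple graph a universal vertex is adjacent to everything but itself,
  so an isomorphism of the subgraphs extends to the whole graphs by any
  bijection between the sets of universal vertices, which are equinumerous
  as soon as the graphs have the same order. *)

Definition universal_vertices (T : finType) (e : rel T) : {set T} :=
  [set x | [forall y, (y != x) ==> e x y]].

Section Bijections.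

Variables (T U : finType).

Lemma equicard_bij_in (g0 : T -> U) (A : {set T}) (B : {set U}) :
  #|A| = #|B| -> exists2 g : T -> U, {in A &, injective g} & g @: A = B.
Proof.
move=> cardAB; pose g x := nth (g0 x) (enum B) (index x (enum A)).
have index_lt x : x \in A -> index x (enum A) < size (enum B).
  by rewrite -cardE -cardAB cardE index_mem mem_enum.
have g_inj : {in A &, injective g}.
  move=> a b Aa Ab; rewrite /g (set_nth_default (g0 a) _ (index_lt b Ab)).
  move/eqP; rewrite nth_uniq ?enum_uniq ?index_lt //.
  by move/eqP/(congr1 (nth a (enum A))); rewrite !nth_index ?mem_enum.
exists g => //; apply/eqP; rewrite eqEcard card_in_imset // cardAB leqnn andbT.
by apply/subsetP => _ /imsetP[x Ax ->]; rewrite -mem_enum mem_nth ?index_lt.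
Qed.

Definition patch (A : {set T}) (g f : T -> U) (x : T) : U :=
  if x \in A then g x else f x.

Variables (A : {set T}) (B : {set U}) (g f : T -> U).
Hypotheses (g_inj : {in A &, injective g}) (gA : g @: A = B).
Hypotheses (f_inj : {in ~: A &, injective f}) (fA : f @: (~: A) = ~: B).

Lemma mem_patch x : (patch A g f x \in B) = (x \in A).
Proof.
rewrite /patch; case: ifP => Ax; first by rewrite -gA imset_f.
by apply/negbTE; rewrite -in_setC -fA imset_f // inE Ax.
Qed.

Lemma patch_inj : injective (patch A g f).
Proof.
move=> a b eq_ab; have := mem_patch a; rewrite eq_ab mem_patch.
move: eq_ab; rewrite /patch; case: ifP => Aa; case: ifP => Ab // eq_ab _.
  exact: g_inj.
by apply: f_inj; rewrite // inE ?Aa ?Ab.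
Qed.

End Bijections.

Section UniversalVertices.

Variables (T : finType) (e : rel T).
Hypothesis e_irr : irreflexive e.

Lemma universal_adjl x y : x \in universal_vertices e -> e x y = (x != y).
Proof.
rewrite inE => /forallP univ_x; case: eqVneq => [<-|neq_xy]; first exact: e_irr.
by apply: (implyP (univ_x y)); rewrite eq_sym.
Qed.

Hypothesis e_sym : symmetric e.

Lemma universal_adjr x y : y \in universal_vertices e -> e x y = (x != y).
Proof. by move=> univ_y; rewrite e_sym universal_adjl // eq_sym. Qed.

End UniversalVertices.

Section GraphIsomorphism.

Variables (T U : finType) (eT : rel T) (eU : rel U).
Let A := universal_vertices eT.
Let B := universal_vertices eU.

Lemma mono_universal_vertices (f : T -> U) :
    bijective f -> {mono f : x y / eT x y >-> eU x y} ->
  forall x, (f x \in B) = (x \in A).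
Proof.
case=> g fK gK f_mono x; rewrite !inE; apply/forallP/forallP => univ_x y.
  by have := univ_x (f y); rewrite (can_eq fK) f_mono.
by rewrite -(gK y) (can_eq fK) f_mono.
Qed.

Lemma graph_iso_restrict_nonuniversal :
  induced_graph_iso eT eU setT setT ->
  induced_graph_iso eT eU (~: A) (~: B) /\ #|T| = #|U|.
Proof.
case=> f [f_inj fT f_adj].
have {}f_inj : injective f by move=> x y; apply: f_inj; rewrite inE.
have f_mono : {mono f : x y / eT x y >-> eU x y}.
  by move=> x y; rewrite f_adj ?inE.
have cardTU : #|T| = #|U| by rewrite -!cardsT -fT card_imset.
have f_bij : bijective f by apply: inj_card_bij f_inj _; rewrite cardTU.
have [g _ gK] := f_bij.
split=> //.
exists f; split => [x y _ _||x y _ _]; [exact: f_inj | | by rewrite f_mono].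
apply/setP => z; rewrite -(gK z) mem_imset // !in_setC.
by rewrite (mono_universal_vertices f_bij f_mono).
Qed.

Hypotheses (eT_irr : irreflexive eT) (eT_sym : symmetric eT).
Hypotheses (eU_irr : irreflexive eU) (eU_sym : symmetric eU).

Lemma graph_iso_extend_universal :
  induced_graph_iso eT eU (~: A) (~: B) -> #|T| = #|U| ->
  induced_graph_iso eT eU setT setT.
Proof.
case=> f [f_inj fA f_adj] cardTU.
have cardAB : #|A| = #|B|.
  apply/(@addIn #|~: A|); rewrite cardsC -(card_in_imset f_inj) fA.
  by rewrite cardsC cardTU.
have [g g_inj gA] := equicard_bij_in f cardAB.
have h_inj := patch_inj g_inj gA f_inj fA.
have mem_h := mem_patch gA fA.
exists (patch A g f); split.
- by move=> x y _ _; apply: h_inj.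
- by apply/eqP; rewrite eqEcard subsetT (card_imset _ h_inj) !cardsT cardTU leqnn.
move=> x y _ _; have h_eq := inj_eq h_inj.
case Ax: (x \in A).
  rewrite (universal_adjl eT_irr) // (universal_adjl eU_irr) ?h_eq //.
  by rewrite /B mem_h.
case Ay: (y \in A).
  rewrite (universal_adjr eT_irr eT_sym) //.
  rewrite (universal_adjr eU_irr eU_sym) ?h_eq //.
  by rewrite /B mem_h.
by rewrite /patch Ax Ay f_adj // inE ?Ax ?Ay.
Qed.

Lemma graph_isoE_nonuniversal :
  induced_graph_iso eT eU setT setT <->
  induced_graph_iso eT eU (~: A) (~: B) /\ #|T| = #|U|.
Proof.
split; first exact: graph_iso_restrict_nonuniversal.
by case; apply: graph_iso_extend_universal.
Qed.

End GraphIsomorphism.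

Lemma epg_adj_irr (gT : finGroupType) : irreflexive (@epg_adj gT).
Proof. by move=> x; rewrite /epg_adj eqxx. Qed.

Lemma epg_adj_sym (gT : finGroupType) : symmetric (@epg_adj gT).
Proof. by move=> x y; rewrite /epg_adj eq_sym setUC. Qed.

Lemma Cyc_universal (gT : finGroupType) :
  Cyc gT = universal_vertices (@epg_adj gT).
Proof.
apply/setP => x; rewrite !inE; apply/forallP/forallP => cyc_x y.
  by rewrite /epg_adj eq_sym cyc_x andbT implybb.
case: (eqVneq y x) => [->|neq_yx]; first by rewrite setUid cycle_cyclic.
by case/andP: (implyP (cyc_x y) neq_yx).
Qed.

Theorem lemma2 (gT hT : finGroupType) :
  Pe_iso gT hT <-> cyc_graph_iso gT hT /\ #|gT| = #|hT|.
Proof.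
rewrite /Pe_iso /cyc_graph_iso !Cyc_universal.
exact: graph_isoE_nonuniversal (@epg_adj_irr gT) (@epg_adj_sym gT)
  (@epg_adj_irr hT) (@epg_adj_sym hT).
Qed.
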